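(* Let $\Omega\subset\mathbb{R}^2$ be a bounded polygonal domain with an admissible mesh, let $\Delta t>0$, $\varepsilon>0$, $\rho\in(0,1]$, $0<M^D<1$, $d_1,d_2>0$, $\kappa_1,\kappa_2,\kappa_3\ge0$, $\kappa_4>0$, $a\ge1$, $b\ge0$, and let $(S^{k-1}_K)_K$, $(M^{k-1}_K)_K$ satisfy $0\le S^{k-1}_K\le1$, $0\le M^{k-1}_K<1$ for all $K\in\mathcal{T}$. Let $(S^\varepsilon,W^\varepsilon)$ be a solution of the system $$\frac{\mathrm{m}(K)}{\Delta t}(S^\varepsilon_K-\rho S^{k-1}_K)-\rho d_1\sum_{\sigma\in\mathcal{E}_K}\tau_\sigma\mathrm{D}_{K,\sigma}S^\varepsilon=\rho\,\mathrm{m}(K)g([S^\varepsilon_K]_+,M^\varepsilon_K),$$ $$\varepsilon\Big(\mathrm{m}(K)W^\varepsilon_K-\sum_{\sigma\in\mathcal{E}_K}\tau_\sigma\mathrm{D}_{K,\sigma}W^\varepsilon\Big)=-\rho\frac{\mathrm{m}(K)}{\Delta t}(M^\varepsilon_K-M^{k-1}_K)+\rho d_2\sum_{\sigma\in\mathcal{E}_K}\tau_\sigma\mathrm{D}_{K,\sigma}F(M^\varepsilon)+\rho\,\mathrm{m}(K)h([S^\varepsilon_K]_+,M^\varepsilon_K)$$ for all $K\in\mathcal{T}$, with boundary values $S^\varepsilon_\sigma=1$, $W^\varepsilon_\sigma=0$ for $\sigma\in\mathcal{E}_{\rm ext}$, where $M^\varepsilon_K\in(0,1)$ is the unique solution of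 $W^\varepsilon_K=F(M^\varepsilon_K)-F(M^D)+\varepsilon\log(M^\varepsilon_K/M^D)$. Then $0\le S^\varepsilon_K\le1$ for all $K\in\mathcal{T}$.
   Context: $f(M)=M^b/(1-M)^a$, $F(M)=\int_0^Mf(s)ds$ for $M\in[0,1)$; $g(S,M)=-\kappa_1\frac{SM}{\kappa_4+S}$, $h(S,M)=\kappa_3\frac{SM}{\kappa_4+S}-\kappa_2M$; $[z]_+=\max\{0,z\}$. Admissible mesh (Eymard–Gallouët–Herbin): open polygonal control volumes $\mathcal{T}$ partitioning $\Omega$, edges $\mathcal{E}=\mathcal{E}_{\rm int}\cup\mathcal{E}_{\rm ext}$, points $x_K$ with $\overline{x_Kx_L}$ orthogonal to each interior edge $\sigma=K|L$; $\mathcal{E}_K$ the edges of $K$. $\mathrm{d}_\sigma=\mathrm{d}(x_K,x_L)$ for $\sigma=K|L$, $\mathrm{d}_\sigma=\mathrm{d}(x_K,\sigma)$ for boundary edges; $\tau_\sigma=\mathrm{m}(\sigma)/\mathrm{d}_\sigma$ ($\mathrm{m}$ = Lebesgue measure). For a vector $v$ with cell values $v_K$ and boundary values $v_\sigma$: $v_{K,\sigma}=v_L$ if $\sigma=K|L$, $v_{K,\sigma}=v_\sigma$ if $\sigma\subset\partial\Omega$; $\mathrm{D}_{K,\sigma}v=v_{K,\sigma}-v_K$. $F(M^\varepsilon)$ has entries $F(M^\varepsilon_K)$ and boundary entries $F(M^D)$. *)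

From HB Require Import structures.
From mathcomp Require Import all_boot all_order all_algebra.
From mathcomp Require Import all_classical all_reals all_analysis.
Set Implicit Arguments. Unset Strict Implicit. Unset Printing Implicit Defensive.
Import Order.TTheory GRing.Theory Num.Theory.
Local Open Scope ring_scope.
Local Open Scope classical_set_scope.

(* Combinatorial/metric data of an admissible (Eymard-Gallouet-Herbin) mesh,
   as used by a two-point flux finite volume scheme.
   [nbr K s = Some L] means the edge s of K is the interior edge K|L,
   [nbr K s = None] means s is an exterior (boundary) edge of K. *)
Record mesh (R : realType) := Mesh {
  cell : finType;
  edge : finType;
  cell_meas : cell -> R;
  edge_meas : edge -> R;
  edge_dist : edge -> R;
  edges_of  : cell -> {set edge};
  ext_edges : {set edge};
  nbr : cell -> edge -> option cell;
  cell_meas_pos : forall K, 0 < cell_meas K;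
  edge_meas_pos : forall s, 0 < edge_meas s;
  edge_dist_pos : forall s, 0 < edge_dist s;
  nbr_ext : forall K s, s \in edges_of K -> (nbr K s = None <-> s \in ext_edges);
  nbr_sym : forall K L s, s \in edges_of K -> nbr K s = Some L ->
      [/\ L != K, s \in edges_of L & nbr L s = Some K];
  nbr_unique : forall K L s, s \in edges_of K -> s \in edges_of L -> L != K ->
      nbr K s = Some L;
  edge_has_cell : forall s, exists K, s \in edges_of K
}.

Section MeshDefs.
Variables (R : realType) (T : mesh R).

Definition tau (s : edge T) : R := edge_meas s / edge_dist s.

Definition vKs (v : cell T -> R) (vb : edge T -> R) (K : cell T) (s : edge T) : R :=
  match nbr K s with Some L => v L | None => vb s end.

Definition DKs (v : cell T -> R) (vb : edge T -> R) (K : cell T) (s : edge T) : R :=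
  vKs v vb K s - v K.

Definition flux (v : cell T -> R) (vb : edge T -> R) (K : cell T) : R :=
  \sum_(s in edges_of K) tau s * DKs v vb K s.
End MeshDefs.

Definition fMb (R : realType) (a b M : R) : R := M `^ b / (1 - M) `^ a.

Definition FMb (R : realType) (a b M : R) : R :=
  Rintegral (@lebesgue_measure R) `[0, M] (fMb a b).

Definition posp (R : realType) (z : R) : R := Num.max 0 z.

Definition gfun (R : realType) (k1 k4 S M : R) : R := - k1 * (S * M / (k4 + S)).
Definition hfun (R : realType) (k2 k3 k4 S M : R) : R :=
  k3 * (S * M / (k4 + S)) - k2 * M.

From HB Require Import structures.
From mathcomp Require Import all_boot all_order all_algebra.
From mathcomp Require Import all_classical all_reals all_analysis.
Import Order.TTheory GRing.Theory Num.Theory.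
Set Implicit Arguments. Unset Strict Implicit.
Local Open Scope ring_scope.

(** Discrete maximum principle for the [S]-equation alone (of the coupling
    only [M >= 0] is used). At a cell where [S] is minimal and negative, the
    boundary value [1] lies above [S K], so the two-point flux is nonnegative,
    and [g([S K]_+, M K) = g(0, M K) = 0]; the scheme then forces
    [S K >= rho * Sold K >= 0]. Symmetrically, at a maximum above [1] the flux
    is nonpositive and [g <= 0], forcing [S K <= rho * Sold K <= 1]. *)

Section TwoPointFlux.
Variables (R : realType) (T : mesh R).
Implicit Types (v : cell T -> R) (vb : edge T -> R) (K : cell T).

Lemma tau_gt0 (s : edge T) : 0 < tau s.
Proof. by rewrite divr_gt0 ?edge_meas_pos ?edge_dist_pos. Qed.

Lemma flux_ge0_at_min v vb K :
  (forall L, v K <= v L) -> (forall s, v K <= vb s) -> 0 <= flux v vb K.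
Proof.
move=> minK minb; apply: sumr_ge0 => s _.
rewrite mulr_ge0 ?(ltW (tau_gt0 s)) // /DKs /vKs subr_ge0.
by case: (nbr K s).
Qed.

Lemma flux_le0_at_max v vb K :
  (forall L, v L <= v K) -> (forall s, vb s <= v K) -> flux v vb K <= 0.
Proof.
move=> maxK maxb; apply: sumr_le0 => s _.
rewrite pmulr_rle0 ?tau_gt0 // /DKs /vKs subr_le0.
by case: (nbr K s).
Qed.

End TwoPointFlux.

Section DiscreteMaxPrinciple.
Variables (R : realType) (T : mesh R) (dt rho d1 : R) (Sold S G : cell T -> R).
Implicit Types K : cell T.
Hypotheses (dt_gt0 : 0 < dt) (rho_gt0 : 0 < rho) (rho_le1 : rho <= 1).
Hypotheses (d1_gt0 : 0 < d1) (Sold01 : forall K, 0 <= Sold K <= 1).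
Hypothesis eqS : forall K,
  cell_meas K / dt * (S K - rho * Sold K) - rho * d1 * flux S (fun _ => 1) K
  = rho * cell_meas K * G K.

Let increment K : cell_meas K / dt * (S K - rho * Sold K)
  = rho * (d1 * flux S (fun _ => 1) K + cell_meas K * G K).
Proof. by rewrite [RHS]mulrDr !mulrA -eqS [RHS]addrC subrK. Qed.

Let mdt_gt0 K : 0 < cell_meas K / dt.
Proof. by rewrite divr_gt0 ?cell_meas_pos. Qed.

Lemma discrete_min_principle :
  (forall K, S K < 0 -> 0 <= G K) -> forall K, 0 <= S K.
Proof.
move=> G_ge0 K0.
have [K _ minK] := @arg_minP _ R _ K0 xpredT S erefl.
apply: le_trans (minK K0 erefl); rewrite leNgt; apply/negP => SK_lt0.
have flux_ge0 : 0 <= flux S (fun _ => 1) K.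
  apply: flux_ge0_at_min => [L|s]; first exact: minK.
  by rewrite (le_trans (ltW SK_lt0)).
have : rho * Sold K <= S K.
  rewrite -subr_ge0 -(pmulr_rge0 _ (mdt_gt0 K)) increment pmulr_rge0 //.
  by rewrite addr_ge0 ?mulr_ge0 ?(ltW d1_gt0) ?(ltW (cell_meas_pos K)) ?G_ge0.
have /andP[Sold_ge0 _] := Sold01 K.
by apply/negP; rewrite -ltNge (lt_le_trans SK_lt0) ?mulr_ge0 ?(ltW rho_gt0).
Qed.

Lemma discrete_max_principle :
  (forall K, 1 < S K -> G K <= 0) -> forall K, S K <= 1.
Proof.
move=> G_le0 K0.
have [K _ maxK] := @arg_maxP _ R _ K0 xpredT S erefl.
apply: le_trans (maxK K0 erefl) _; rewrite leNgt; apply/negP => SK_gt1.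
have flux_le0 : flux S (fun _ => 1) K <= 0.
  apply: flux_le0_at_max => [L|s]; first exact: maxK.
  exact: ltW.
have : S K <= rho * Sold K.
  rewrite -subr_le0 -(pmulr_rle0 _ (mdt_gt0 K)) increment pmulr_rle0 //.
  by rewrite -[0](addr0 0) lerD // pmulr_rle0 ?cell_meas_pos ?G_le0.
have /andP[_ Sold_le1] := Sold01 K.
apply/negP; rewrite -ltNge (le_lt_trans _ SK_gt1) //.
by rewrite (le_trans (ler_wpM2l (ltW rho_gt0) Sold_le1)) ?mulr1.
Qed.

End DiscreteMaxPrinciple.

Lemma posp_ge0 (R : realType) (z : R) : 0 <= posp z.
Proof. by rewrite /posp le_max lexx. Qed.

Section Reaction.
Variables (R : realType) (k1 k4 : R).
Hypotheses (k1_ge0 : 0 <= k1) (k4_gt0 : 0 < k4).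

Lemma gfun_posp_lt0 (S M : R) : S < 0 -> gfun k1 k4 (posp S) M = 0.
Proof. by move=> S_lt0; rewrite /gfun /posp (max_idPl (ltW S_lt0)) !mul0r mulr0. Qed.

Lemma gfun_le0 (S M : R) : 0 <= S -> 0 <= M -> gfun k1 k4 S M <= 0.
Proof.
move=> S_ge0 M_ge0; rewrite /gfun mulNr oppr_le0 mulr_ge0 //.
by rewrite divr_ge0 ?mulr_ge0 // addr_ge0 // ltW.
Qed.

End Reaction.

Theorem lemma3p1 (R : realType) (T : mesh R)
  (dt eps rho MD d1 d2 k1 k2 k3 k4 a b : R)
  (Sold Mold S W M : cell T -> R)
  (hdt : 0 < dt) (heps : 0 < eps) (hrho : 0 < rho <= 1)
  (hMD : 0 < MD < 1) (hd1 : 0 < d1) (hd2 : 0 < d2)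
  (hk1 : 0 <= k1) (hk2 : 0 <= k2) (hk3 : 0 <= k3) (hk4 : 0 < k4)
  (ha : 1 <= a) (hb : 0 <= b)
  (hSold : forall K, 0 <= Sold K <= 1)
  (hMold : forall K, 0 <= Mold K < 1)
  (hM : forall K, 0 < M K < 1 /\
        W K = FMb a b (M K) - FMb a b MD + eps * ln (M K / MD))
  (eqS : forall K,
     cell_meas K / dt * (S K - rho * Sold K)
     - rho * d1 * flux S (fun _ => 1) K
     = rho * cell_meas K * gfun k1 k4 (posp (S K)) (M K))
  (eqW : forall K,
     eps * (cell_meas K * W K - flux W (fun _ => 0) K)
     = - rho * (cell_meas K / dt) * (M K - Mold K)
       + rho * d2 * flux (fun L => FMb a b (M L)) (fun _ => FMb a b MD) K
       + rho * cell_meas K * hfun k2 k3 k4 (posp (S K)) (M K)) :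
  forall K, 0 <= S K <= 1.
Proof.
move=> K; have /andP[rho_gt0 rho_le1] := hrho.
have M_ge0 L : 0 <= M L by have [/andP[/ltW]] := hM L.
apply/andP; split.
- apply: (discrete_min_principle hdt rho_gt0 hd1 hSold eqS) => L S_lt0.
  by rewrite gfun_posp_lt0.
- apply: (discrete_max_principle hdt rho_gt0 rho_le1 hd1 hSold eqS) => L _.
  by rewrite gfun_le0 ?posp_ge0.
Qed.
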